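(* Let $\nu>2$, $\kappa\in(0,1/2-1/\nu)$, $C\ge0$ and $R,J:(0,\infty)\to[0,\infty)$, and define $\gamma(m,\delta)=C\,m\,(R(\delta)+J(\delta)m^{-\kappa})^2$ for $m\in\mathbb N$, $\delta>0$. Then: (i) For every $\delta>0$, the pair $(\nu/2,\gamma(\cdot,\delta))$ fulfills condition (S) with index $Q=2^{2\kappa}\in[1,2^{1-2/\nu})$. (ii) For every $\delta>0$, there is a constant $C'\ge0$ such that for each $0<\varepsilon\le1$, $\limsup_{n\to\infty}\gamma(\lfloor n\varepsilon\rfloor,\delta)/n\le C'\varepsilon$ (with the convention $\gamma(0,\delta)=0$). (iii) If $\lim_{\delta\downarrow0}R(\delta)=0$, then $\lim_{\delta\downarrow0}\limsup_{n\to\infty}\gamma(n,\delta)/n=0$.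
   Context: Condition (S): for $\alpha>1$ and $g:\mathbb N\to\mathbb R$, the pair $(\alpha,g)$ fulfills (S) with index $Q\in[1,2^{(\alpha-1)/\alpha})$ if (i) $g\ge0$, (ii) $g$ is nondecreasing, and (iii) $g(i)+g(j-i)\le Q g(j)$ for all $1\le i<j$. *)

From Stdlib Require Import Reals ZArith.
From Coquelicot Require Import Coquelicot.
Open Scope R_scope.

Definition cond_S (alpha : R) (g : nat -> R) (Q : R) : Prop :=
  1 < alpha /\
  1 <= Q < Rpower 2 ((alpha - 1) / alpha) /\
  (forall n : nat, (1 <= n)%nat -> 0 <= g n) /\
  (forall m n : nat, (1 <= m)%nat -> (m <= n)%nat -> g m <= g n) /\
  (forall i j : nat, (1 <= i)%nat -> (i < j)%nat -> g i + g (j - i)%nat <= Q * g j).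

Definition gamma (C kappa : R) (Rf Jf : R -> R) (m : nat) (delta : R) : R :=
  match m with
  | O => 0
  | S _ => C * INR m * (Rf delta + Jf delta * Rpower (INR m) (- kappa)) ^ 2
  end.

Definition nat_floor (x : R) : nat := Z.to_nat (Int_part x).

(* Writing m^(-kappa) = m^kappa / m and pulling m^kappa out of the square,
   gamma(m) = C m^r (R m^kappa + J)^2 with r = 1 - 2 kappa in (0, 1): a concave
   power times a nondecreasing factor.  Concavity of t |-> t^r gives
   a^r + b^r <= 2^(1-r) (a+b)^r, hence (S) with Q = 2^(2 kappa), and the
   constraint kappa < 1/2 - 1/nu is exactly Q < 2^(1-2/nu).  Since
   m^(-kappa) <= 1, gamma(m) <= C (R + J)^2 m, which gives (ii); and
   gamma(n)/n = C (R + J n^(-kappa))^2 tends to C R^2, which gives (iii). *)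
From Stdlib Require Import Reals ZArith Lra Lia.
From Coquelicot Require Import Coquelicot.
Open Scope R_scope.

Lemma ln_le_sub_1 y : 0 < y -> ln y <= y - 1.
Proof. intros Hy. generalize (exp_ineq1_le (ln y)). rewrite exp_ln by lra. lra. Qed.

Lemma Rpower_le_affine s r : 0 < s -> 0 < r < 1 -> Rpower s r <= r * s + (1 - r).
Proof.
  intros Hs Hr. set (w := r * s + (1 - r)).
  assert (Hw : 0 < w) by (unfold w; nra).
  unfold Rpower. rewrite <- (exp_ln w) by exact Hw.
  enough (Hln : r * ln s <= ln w).
  { destruct Hln as [Hlt | ->]; [left; apply exp_increasing, Hlt | right; reflexivity]. }
  (* ln t <= t - 1 at t = s/w and t = 1/w, weighted by r and 1 - r: the right-hand sides cancel. *)
  assert (Hs_w := ln_le_sub_1 (s / w) ltac:(apply Rdiv_lt_0_compat; lra)).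
  assert (H1_w := ln_le_sub_1 (/ w) ltac:(apply Rinv_0_lt_compat; lra)).
  rewrite ln_div in Hs_w by lra. rewrite ln_Rinv in H1_w by lra.
  assert (r * (s / w - 1) + (1 - r) * (/ w - 1) = 0) by (unfold w in *; field; lra).
  nra.
Qed.

Lemma Rpower_add_le x y r : 0 < x -> 0 < y -> 0 < r < 1 ->
  Rpower x r + Rpower y r <= Rpower 2 (1 - r) * Rpower (x + y) r.
Proof.
  intros Hx Hy Hr. set (c := (x + y) / 2).
  assert (Hc : 0 < c) by (unfold c; lra).
  assert (Hc_r : 0 < Rpower c r) by apply exp_pos.
  assert (Hrhs : Rpower 2 (1 - r) * Rpower (x + y) r = 2 * Rpower c r).
  { replace (x + y) with (2 * c) by (unfold c; field).
    rewrite <- Rpower_mult_distr, <- Rmult_assoc, <- Rpower_plus by lra.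
    replace (1 - r + r) with 1 by ring. rewrite Rpower_1; lra. }
  rewrite Hrhs, (Rmult_comm 2).
  replace x with (x / c * c) at 1 by (field; lra).
  replace y with (y / c * c) at 1 by (field; lra).
  rewrite <- !Rpower_mult_distr by (try apply Rdiv_lt_0_compat; lra).
  assert (Hx_c := Rpower_le_affine (x / c) r ltac:(apply Rdiv_lt_0_compat; lra) Hr).
  assert (Hy_c := Rpower_le_affine (y / c) r ltac:(apply Rdiv_lt_0_compat; lra) Hr).
  assert (r * (x / c) + (1 - r) + (r * (y / c) + (1 - r)) = 2) by (unfold c; field; lra).
  nra.
Qed.

Lemma is_lim_seq_Rpower_INR_opp k : 0 < k -> is_lim_seq (fun n => Rpower (INR n) (- k)) 0.
Proof.
  intros Hk. unfold Rpower.
  apply (filterlim_comp _ _ _ INR (fun x => exp (- k * ln x)) eventually (Rbar_locally p_infty)).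
  - exact is_lim_seq_INR.
  - apply (is_lim_comp exp (fun x => - k * ln x) p_infty 0 m_infty).
    + exact is_lim_exp_m.
    + replace m_infty with (Rbar_mult (- k) p_infty).
      * apply is_lim_scal_l. exact is_lim_ln_p.
      * apply is_Rbar_mult_unique, is_Rbar_mult_sym, is_Rbar_mult_p_infty_neg.
        simpl; lra.
    + exists 0. intros y _. discriminate.
Qed.

Lemma INR_nat_floor_le x : 0 <= x -> INR (nat_floor x) <= x.
Proof.
  intros Hx. unfold nat_floor. destruct (base_Int_part x) as [Hle _].
  destruct (Z_le_gt_dec 0 (Int_part x)) as [Hz | Hz].
  - rewrite INR_IZR_INZ, Z2Nat.id by exact Hz. exact Hle.
  - replace (Z.to_nat (Int_part x)) with 0%nat by lia. simpl. exact Hx.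
Qed.

Lemma LimSup_floor_div_le (g : nat -> R) (L eps : R) :
  0 <= L -> 0 < eps -> (forall m, g m <= L * INR m) ->
  Rbar_le (LimSup_seq (fun n => g (nat_floor (INR n * eps)) / INR n)) (L * eps).
Proof.
  intros HL Heps Hg. rewrite <- LimSup_seq_const. apply LimSup_le.
  exists 1%nat. intros n Hn.
  assert (Hn0 : 0 < INR n) by (apply lt_0_INR; lia).
  assert (Hfloor := INR_nat_floor_le (INR n * eps) ltac:(nra)).
  specialize (Hg (nat_floor (INR n * eps))).
  apply Rle_div_l; nra.
Qed.

Definition pow_weighted (c r : R) (h : R -> R) (x : R) : R := c * Rpower x r * h x.

Section PowWeighted.

Variables (c r : R) (h : R -> R).
Hypothesis c_ge0 : 0 <= c.
Hypothesis h_ge0 : forall x, 0 < x -> 0 <= h x.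
Hypothesis h_mono : forall x y, 0 < x <= y -> h x <= h y.

Lemma pow_weighted_ge0 x : 0 < x -> 0 <= pow_weighted c r h x.
Proof.
  intros Hx. unfold pow_weighted.
  assert (0 < Rpower x r) by apply exp_pos.
  specialize (h_ge0 x Hx). apply Rmult_le_pos; [apply Rmult_le_pos|]; lra.
Qed.

Lemma pow_weighted_mono x y : 0 <= r -> 0 < x <= y ->
  pow_weighted c r h x <= pow_weighted c r h y.
Proof.
  intros Hr Hxy. unfold pow_weighted.
  assert (0 < Rpower x r) by apply exp_pos.
  assert (Rpower x r <= Rpower y r) by (apply Rle_Rpower_l; lra).
  assert (0 <= h x) by (apply h_ge0; lra).
  specialize (h_mono x y Hxy).
  apply Rmult_le_compat; try apply Rmult_le_compat_l; try apply Rmult_le_pos; lra.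
Qed.

Lemma pow_weighted_add_le x y : 0 < r < 1 -> 0 < x -> 0 < y ->
  pow_weighted c r h x + pow_weighted c r h y
  <= Rpower 2 (1 - r) * pow_weighted c r h (x + y).
Proof.
  intros Hr Hx Hy. unfold pow_weighted.
  assert (Hxy := Rpower_add_le x y r Hx Hy Hr).
  assert (0 < Rpower x r) by apply exp_pos.
  assert (0 < Rpower y r) by apply exp_pos.
  assert (h x <= h (x + y)) by (apply h_mono; lra).
  assert (h y <= h (x + y)) by (apply h_mono; lra).
  assert (0 <= h (x + y)) by (apply h_ge0; lra).
  assert (Rpower x r * h x + Rpower y r * h y
          <= Rpower 2 (1 - r) * Rpower (x + y) r * h (x + y)) by nra.
  assert (c * (Rpower x r * h x + Rpower y r * h y)
          <= c * (Rpower 2 (1 - r) * Rpower (x + y) r * h (x + y)))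
    by (apply Rmult_le_compat_l; lra).
  lra.
Qed.

Lemma cond_S_pow_weighted (alpha : R) (g : nat -> R) :
  1 < alpha -> 0 < r < 1 -> 1 - r < (alpha - 1) / alpha ->
  (forall n, (1 <= n)%nat -> g n = pow_weighted c r h (INR n)) ->
  cond_S alpha g (Rpower 2 (1 - r)).
Proof.
  intros Halpha Hr Hindex Hg.
  assert (INR_pos : forall n, (1 <= n)%nat -> 0 < INR n) by (intros; apply lt_0_INR; lia).
  split; [exact Halpha|]. split; [split|split; [|split]].
  - rewrite <- (Rpower_O 2) at 1 by lra. apply Rle_Rpower; lra.
  - apply Rpower_lt; lra.
  - intros n Hn. rewrite Hg by exact Hn. apply pow_weighted_ge0, INR_pos, Hn.
  - intros m n Hm Hmn. rewrite !Hg by lia.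
    apply pow_weighted_mono; [lra|]. split; [apply INR_pos, Hm | apply le_INR, Hmn].
  - intros i j Hi Hij. rewrite !Hg by lia.
    replace (INR j) with (INR i + INR (j - i)) by (rewrite minus_INR by lia; ring).
    apply pow_weighted_add_le; [exact Hr | apply INR_pos; lia ..].
Qed.

End PowWeighted.

Section Gamma.

Variables (C kappa : R) (Rf Jf : R -> R) (delta : R).
Hypothesis C_ge0 : 0 <= C.
Hypothesis kappa_pos : 0 < kappa.
Hypothesis Rf_ge0 : 0 <= Rf delta.
Hypothesis Jf_ge0 : 0 <= Jf delta.

Definition gamma_shape (x : R) : R := (Rf delta * Rpower x kappa + Jf delta) ^ 2.

Lemma gamma_shape_mono x y : 0 < x <= y -> gamma_shape x <= gamma_shape y.
Proof.
  intros Hxy. unfold gamma_shape.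
  assert (0 < Rpower x kappa) by apply exp_pos.
  assert (Rpower x kappa <= Rpower y kappa) by (apply Rle_Rpower_l; lra).
  apply pow_incr. nra.
Qed.

Lemma gamma_pow_weighted m : (1 <= m)%nat ->
  gamma C kappa Rf Jf m delta = pow_weighted C (1 - 2 * kappa) gamma_shape (INR m).
Proof.
  intros Hm. destruct m as [|m]; [lia|].
  unfold gamma, pow_weighted, gamma_shape. set (x := INR (S m)).
  assert (Hx : 0 < x) by (unfold x; apply lt_0_INR; lia).
  assert (Hinv : Rpower x kappa * Rpower x (- kappa) = 1).
  { rewrite <- Rpower_plus. replace (kappa + - kappa) with 0 by ring. apply Rpower_O, Hx. }
  replace x with (Rpower x (1 - 2 * kappa) * Rpower x kappa * Rpower x kappa) at 1.
  - replace (Jf delta) with (Jf delta * (Rpower x kappa * Rpower x (- kappa))) at 2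
      by (rewrite Hinv; ring).
    ring.
  - rewrite <- !Rpower_plus. replace (1 - 2 * kappa + kappa + kappa) with 1 by ring.
    apply Rpower_1, Hx.
Qed.

Lemma gamma_le_linear m :
  gamma C kappa Rf Jf m delta <= C * (Rf delta + Jf delta) ^ 2 * INR m.
Proof.
  destruct m as [|m]; [simpl; lra|]. unfold gamma.
  assert (Hm : 1 <= INR (S m)) by (apply (le_INR 1); lia).
  assert (0 < Rpower (INR (S m)) (- kappa)) by apply exp_pos.
  assert (Rpower (INR (S m)) (- kappa) <= 1).
  { rewrite <- (Rpower_O (INR (S m))) by lra. apply Rle_Rpower; lra. }
  assert ((Rf delta + Jf delta * Rpower (INR (S m)) (- kappa)) ^ 2
          <= (Rf delta + Jf delta) ^ 2) by (apply pow_incr; nra).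
  assert (0 <= C * INR (S m)) by nra.
  nra.
Qed.

Lemma is_lim_seq_gamma_div :
  is_lim_seq (fun n => gamma C kappa Rf Jf n delta / INR n) (C * Rf delta ^ 2).
Proof.
  apply is_lim_seq_ext_loc with
    (u := fun n => C * (Rf delta + Jf delta * Rpower (INR n) (- kappa)) ^ 2).
  - exists 1%nat. intros n Hn. destruct n as [|n]; [lia|]. unfold gamma.
    assert (0 < INR (S n)) by (apply lt_0_INR; lia).
    field. lra.
  - replace (C * Rf delta ^ 2) with ((fun t => C * (Rf delta + Jf delta * t) ^ 2) 0)
      by ring.
    apply (is_lim_seq_continuous (fun t => C * (Rf delta + Jf delta * t) ^ 2)).
    + reg.
    + apply is_lim_seq_Rpower_INR_opp, kappa_pos.
Qed.

End Gamma.

Lemma filterlim_scal_sq_0 {T : Type} (F : (T -> Prop) -> Prop) (C : R) (f : T -> R) :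
  filterlim f F (locally 0) ->
  filterlim (fun d => Finite (C * f d ^ 2)) F (Rbar_locally (Finite 0)).
Proof.
  intros Hf.
  assert (Hsq : filterlim (fun x => C * x ^ 2) (locally 0) (locally 0)).
  { replace 0 with (C * 0 ^ 2) at 2 by ring.
    apply (continuity_pt_filterlim (fun x => C * x ^ 2) 0). reg. }
  intros P HP. exact (filterlim_comp _ _ _ f _ _ _ _ Hf Hsq (fun x => P (Finite x)) HP).
Qed.

Theorem lemma2p5 (nu kappa C : R) (Rf Jf : R -> R)
  (Hnu : 2 < nu)
  (Hkappa : 0 < kappa < 1 / 2 - 1 / nu)
  (HC : 0 <= C)
  (HR : forall d : R, 0 < d -> 0 <= Rf d)
  (HJ : forall d : R, 0 < d -> 0 <= Jf d) :
  (* (i) *)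
  (forall delta : R, 0 < delta ->
     cond_S (nu / 2) (fun m => gamma C kappa Rf Jf m delta) (Rpower 2 (2 * kappa))) /\
  (* (ii) *)
  (forall delta : R, 0 < delta ->
     exists C' : R, 0 <= C' /\
       forall eps : R, 0 < eps <= 1 ->
         Rbar_le
           (LimSup_seq (fun n : nat =>
              gamma C kappa Rf Jf (nat_floor (INR n * eps)) delta / INR n))
           (Finite (C' * eps))) /\
  (* (iii) *)
  (filterlim Rf (at_right 0) (locally 0) ->
     filterlim (fun delta : R =>
                  LimSup_seq (fun n : nat => gamma C kappa Rf Jf n delta / INR n))
               (at_right 0) (Rbar_locally (Finite 0))).
Proof.
  assert (0 < 1 / nu) by (apply Rdiv_lt_0_compat; lra).
  split; [|split].
  - intros d Hd. replace (2 * kappa) with (1 - (1 - 2 * kappa)) by ring.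
    apply (cond_S_pow_weighted C _ (gamma_shape kappa Rf Jf d)); try lra.
    + intros x _. apply pow2_ge_0.
    + apply gamma_shape_mono; [lra | apply HR, Hd | apply HJ, Hd].
    + replace ((nu / 2 - 1) / (nu / 2)) with (1 - 2 * (1 / nu)) by (field; lra). lra.
    + apply gamma_pow_weighted.
  - intros d Hd. exists (C * (Rf d + Jf d) ^ 2).
    assert (0 <= C * (Rf d + Jf d) ^ 2) by (apply Rmult_le_pos; [lra | apply pow2_ge_0]).
    split; [assumption|]. intros eps Heps.
    apply (LimSup_floor_div_le (fun m => gamma C kappa Rf Jf m d)); [assumption | lra |].
    intros m. apply gamma_le_linear; [lra | lra | apply HR, Hd | apply HJ, Hd].
  - intros HRlim.
    apply filterlim_ext_loc with (f := fun d => Finite (C * Rf d ^ 2)).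
    + exists (mkposreal 1 Rlt_0_1). intros d _ Hd.
      symmetry. apply is_LimSup_seq_unique, is_lim_LimSup_seq.
      apply is_lim_seq_gamma_div; lra.
    + apply filterlim_scal_sq_0, HRlim.
Qed.
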